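(* Let $M,a,b,c$ be positive integers. The following are equivalent: (i) there is a three-link protocol solving MEQ-AD$(3,M)$ in which the ranges of $s_{AB},s_{AC},s_{BC}$ have sizes $a,b,c$ respectively (so its complexity is $\log_2(abc)$); (ii) there is a simple bipartite graph $G(U,V,E)$ with $|U|=a$, $|V|=b$, $|E|=M$ and no isolated vertices, together with a distance-2 edge coloring $W$ of $G$ using exactly $c$ colors. Moreover, when these hold, $ab\ge M$, $ac\ge M$ and $bc\ge M$.
   Context: Three nodes $A,B,C$ hold inputs $x_A,x_B,x_C\in\{1,\dots,M\}$. A three-link protocol is given by maps $s_{AB},s_{AC},s_{BC}$ from $\{1,\dots,M\}$ to finite sets: $A$ sends $s_{AB}(x_A)$ to $B$ and $s_{AC}(x_A)$ to $C$, and $B$ sends $s_{BC}(x_B)$ to $C$ over private point-to-point links. Each node outputs a bit: $EQ_A$ is a function of $x_A$, $EQ_B$ a function of $(x_B,s_{AB}(x_A))$, and $EQ_C$ a function of $(x_C,s_{AC}(x_A),s_{BC}(x_B))$. The protocol solves MEQ-AD$(3,M)$ if for all inputs, $EQ_A=EQ_B=EQ_C=0$ holds iff $x_A=x_B=x_C$. A distance-2 edge coloring of a graph assigns colors to edges so that any two distinct edges that share an endpoint, or are both adjacent to a common third edge, receive different colors. *)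

From mathcomp Require Import all_boot.
Set Implicit Arguments. Unset Strict Implicit. Unset Printing Implicit Defensive.

(* Inputs {1,...,M} are represented by 'I_M; output bit 0 is [false]. *)

Record protocol (M : nat) (TAB TAC TBC : finType) := Protocol {
  s_AB : 'I_M -> TAB;
  s_AC : 'I_M -> TAC;
  s_BC : 'I_M -> TBC;
  EQ_A : 'I_M -> bool;
  EQ_B : 'I_M -> TAB -> bool;
  EQ_C : 'I_M -> TAC -> TBC -> bool
}.

Definition solves_MEQ_AD3 M TAB TAC TBC (P : protocol M TAB TAC TBC) : Prop :=
  forall xA xB xC : 'I_M,
    (EQ_A P xA = false /\ EQ_B P xB (s_AB P xA) = false /\
     EQ_C P xC (s_AC P xA) (s_BC P xB) = false)
    <-> (xA = xB /\ xB = xC).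

Definition range_size M (T : finType) (f : 'I_M -> T) : nat := #|f @: [set: 'I_M]|.

Definition no_isolated (U V : finType) (E : {set U * V}) : Prop :=
  (forall u : U, exists v : V, (u, v) \in E) /\
  (forall v : V, exists u : U, (u, v) \in E).

Definition edge_adj (U V : finType) (e f : U * V) : bool :=
  (e != f) && ((e.1 == f.1) || (e.2 == f.2)).

Definition distance2_coloring (U V C : finType) (E : {set U * V}) (W : U * V -> C)
  : Prop :=
  forall e f, e \in E -> f \in E -> e != f ->
    (edge_adj e f \/ exists2 g, g \in E & edge_adj e g && edge_adj g f) ->
    W e != W f.

From mathcomp Require Import all_boot.

Set Implicit Arguments.
Unset Strict Implicit.
Unset Printing Implicit Defensive.

(* (i) => (ii): an input x becomes the edge (s_AB x, s_AC x) between the ranges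
   of s_AB and s_AC, coloured by s_BC x.  If two distinct edges joined by a path
   of length at most 2 had the same colour, handing the middle input of the path
   to A and the end inputs to B and C would make all three nodes output 0
   although the inputs differ.  (ii) => (i): inputs are the edges; A sends the
   endpoints of its edge, B the colour of its edge, and B and C output 0 iff what
   they receive agrees with their own edge; the distance-2 condition makes this
   correct.  The bounds hold because any two of the three messages determine the
   input. *)

Section Fooling.

Variables (M : nat) (TAB TAC TBC : finType) (P : protocol M TAB TAC TBC).
Hypothesis solP : solves_MEQ_AD3 P.

Lemma solves_fooling xA xB xC :
  s_AB P xA = s_AB P xB -> s_AC P xA = s_AC P xC -> s_BC P xB = s_BC P xC ->
  xA = xB /\ xB = xC.
Proof.
move=> eAB eAC eBC; apply/(solP xA xB xC).
have [hA _] := proj2 (solP xA xA xA) (conj erefl erefl).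
have [_ [hB _]] := proj2 (solP xB xB xB) (conj erefl erefl).
have [_ [_ hC]] := proj2 (solP xC xC xC) (conj erefl erefl).
by rewrite hA eAB eAC eBC hB hC.
Qed.

Lemma solves_inj_AB_AC x y : s_AB P x = s_AB P y -> s_AC P x = s_AC P y -> x = y.
Proof. by move=> eAB eAC; case: (solves_fooling eAB eAC erefl). Qed.

Lemma solves_inj_AB_BC x y : s_AB P x = s_AB P y -> s_BC P x = s_BC P y -> x = y.
Proof. by move=> eAB eBC; case: (solves_fooling eAB erefl (esym eBC)). Qed.

Lemma solves_inj_AC_BC x y : s_AC P x = s_AC P y -> s_BC P x = s_BC P y -> x = y.
Proof. by move=> eAC eBC; case: (solves_fooling erefl eAC eBC). Qed.

End Fooling.

Lemma leq_card_mul_imset (X T1 T2 : finType) (f : X -> T1) (g : X -> T2) :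
  (forall x y, f x = f y -> g x = g y -> x = y) ->
  #|X| <= #|f @: [set: X]| * #|g @: [set: X]|.
Proof.
move=> fg_inj; rewrite -cardsX.
have pair_inj : injective (fun x => (f x, g x)) by move=> x y [] /fg_inj; apply.
rewrite -cardsT -(card_imset _ pair_inj); apply: subset_leq_card.
by apply/subsetP => _ /imsetP [x _ ->]; rewrite in_setX !imset_f ?in_setT.
Qed.

Lemma edge_adj_endpoint (U V : finType) (e e' : U * V) :
  edge_adj e e' -> e.1 = e'.1 \/ e.2 = e'.2.
Proof. by case/andP=> _ /orP [] /eqP; auto. Qed.

Section ProtocolGraph.

Variables (X U V C : finType) (f : X -> U) (g : X -> V) (h : X -> C).
Hypothesis fooling : forall x y z,
  f x = f y -> g x = g z -> h y = h z -> x = y /\ y = z.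

Lemma fooling_pair_inj : injective (fun x => (f x, g x)).
Proof. by move=> x y [ef eg]; case: (fooling ef eg erefl). Qed.

Lemma fooling_path x y z :
  f x = f y \/ g x = g y -> f y = f z \/ g y = g z -> h x = h z -> x = z.
Proof.
move=> [efxy|egxy] [efyz|egyz] ehxz.
- by case: (fooling (etrans efxy efyz) erefl (esym ehxz)).
- by case: (fooling (esym efxy) egyz ehxz) => <-.
- by case: (fooling efyz (esym egxy) (esym ehxz)) => _ ->.
- by case: (fooling erefl (etrans egxy egyz) ehxz).
Qed.

Definition fooling_edges : {set U * V} := [set (f x, g x) | x in [set: X]].

Definition fooling_colour (x0 : X) (e : U * V) : C :=
  h (odflt x0 [pick x | (f x, g x) == e]).

Lemma fooling_colourE x0 x : fooling_colour x0 (f x, g x) = h x.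
Proof.
rewrite /fooling_colour; case: pickP => [y /eqP /fooling_pair_inj -> //|].
by move/(_ x); rewrite eqxx.
Qed.

Lemma card_fooling_edges : #|fooling_edges| = #|X|.
Proof. by rewrite card_imset ?cardsT //; exact: fooling_pair_inj. Qed.

Lemma fooling_edges_no_isolated :
  (forall u, exists x, f x = u) -> (forall v, exists x, g x = v) ->
  no_isolated fooling_edges.
Proof.
move=> f_surj g_surj; split=> [u | v].
- by have [x <-] := f_surj u; exists (g x); rewrite imset_f ?in_setT.
- by have [x <-] := g_surj v; exists (f x); rewrite imset_f ?in_setT.
Qed.

Lemma fooling_colour_distance2 x0 :
  distance2_coloring fooling_edges (fooling_colour x0).
Proof.
move=> _ _ /imsetP [x _ ->] /imsetP [z _ ->] nexz adj.
rewrite !fooling_colourE; apply: contra nexz => /eqP ehxz.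
suff -> : x = z by [].
case: adj => [/edge_adj_endpoint adjxz | [_ /imsetP [y _ ->]]].
  by apply: (fooling_path adjxz _ ehxz); left.
case/andP=> /edge_adj_endpoint adjxy /edge_adj_endpoint adjyz.
exact: (fooling_path adjxy adjyz ehxz).
Qed.

Lemma fooling_colour_imset x0 : fooling_colour x0 @: fooling_edges = h @: [set: X].
Proof.
rewrite -imset_comp; apply: eq_imset => x /=; exact: fooling_colourE.
Qed.

End ProtocolGraph.

Definition range_of (X T : finType) (f : X -> T) : finType :=
  {y : T | y \in f @: [set: X]}.

Definition corestrict (X T : finType) (f : X -> T) (x : X) : range_of f :=
  exist _ (f x) (imset_f f (in_setT x)).

Lemma card_range_of (X T : finType) (f : X -> T) : #|range_of f| = #|f @: [set: X]|.
Proof. by rewrite card_sig; apply: eq_card. Qed.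

Lemma corestrict_surj (X T : finType) (f : X -> T) (y : range_of f) :
  exists x, corestrict f x = y.
Proof.
case: y => y /[dup] /imsetP [x _ ->] fx; exists x.
by congr exist; exact: bool_irrelevance.
Qed.

Section GraphProtocol.

Variables (U V C : finType) (E : {set U * V}) (W : U * V -> C).

Lemma distance2_coloring_path : distance2_coloring E W ->
  forall e m e', e \in E -> m \in E -> e' \in E ->
  e.1 = m.1 -> m.2 = e'.2 -> W e = W e' -> e = e'.
Proof.
move=> colW e m e' eE mE e'E e1m m2e' eW; apply/eqP/negP => /negP nee'.
have adj : edge_adj e e' \/ exists2 g, g \in E & edge_adj e g && edge_adj g e'.
  have [eem|nem] := eqVneq e m.
    by left; rewrite /edge_adj nee' eem m2e' eqxx orbT.
  have [me'|nme'] := eqVneq m e'.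
    by left; rewrite /edge_adj nee' e1m me' eqxx.
  by right; exists m; rewrite // /edge_adj nem nme' e1m m2e' !eqxx orbT.
by move: (colW e e' eE e'E nee' adj); rewrite eW eqxx.
Qed.

Lemma imset_enum_val (T : finType) (F : U * V -> T) :
  [set F (enum_val i) | i in [set: 'I_#|E|]] = F @: E.
Proof.
apply/setP => t; apply/imsetP/imsetP => [[i _ ->] | [e eE ->]].
  by exists (enum_val i); rewrite ?enum_valP.
by exists (enum_rank_in eE e); rewrite ?in_setT ?enum_rankK_in.
Qed.

Lemma no_isolated_imset_fst : no_isolated E -> fst @: E = [set: U].
Proof.
case=> isoU _; apply/setP => u; rewrite in_setT.
by have [v uvE] := isoU u; apply/imsetP; exists (u, v).
Qed.

Lemma no_isolated_imset_snd : no_isolated E -> snd @: E = [set: V].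
Proof.
case=> _ isoV; apply/setP => v; rewrite in_setT.
by have [u uvE] := isoV v; apply/imsetP; exists (u, v).
Qed.

Definition graph_protocol : protocol #|E| U V C :=
  Protocol (fun i : 'I_#|E| => (enum_val i).1) (fun i : 'I_#|E| => (enum_val i).2)
    (fun i : 'I_#|E| => W (enum_val i)) (fun _ => false)
    (fun (xB : 'I_#|E|) u => (enum_val xB).1 != u)
    (fun (xC : 'I_#|E|) v w => ((enum_val xC).2 != v) || (W (enum_val xC) != w)).

Lemma graph_protocol_solves : distance2_coloring E W -> solves_MEQ_AD3 graph_protocol.
Proof.
move=> colW xA xB xC /=; split; last by case=> -> ->; rewrite !eqxx.
case=> _ [/negbFE/eqP eA /norP [/negbNE/eqP eC /negbNE/eqP eW]].
have eBC : enum_val xB = enum_val xC.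
  apply: (distance2_coloring_path colW _ _ _ eA (esym eC) (esym eW));
  exact: enum_valP.
have eAB : enum_val xA = enum_val xB.
  by rewrite [enum_val xA]surjective_pairing -eA -eC -eBC -surjective_pairing.
by split; apply: enum_val_inj.
Qed.

End GraphProtocol.

Theorem theorem1 (M a b c : nat) (hM : 0 < M) (ha : 0 < a) (hb : 0 < b) (hc : 0 < c) :
  let protocol_exists :=
    exists (TAB TAC TBC : finType) (P : protocol M TAB TAC TBC),
      solves_MEQ_AD3 P /\
      range_size (s_AB P) = a /\ range_size (s_AC P) = b /\ range_size (s_BC P) = c in
  let graph_exists :=
    exists (U V C : finType) (E : {set U * V}) (W : U * V -> C),
      #|U| = a /\ #|V| = b /\ #|E| = M /\ no_isolated E /\
      distance2_coloring E W /\ #|W @: E| = c in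
  (protocol_exists <-> graph_exists) /\
  (protocol_exists -> M <= a * b /\ M <= a * c /\ M <= b * c).
Proof.
move=> protocol_exists graph_exists; rewrite {}/protocol_exists {}/graph_exists.
split; last first.
  case=> TAB [TAC [TBC [P [solP [<- [<- <-]]]]]].
  rewrite /range_size; split; [|split]; rewrite -{1}(card_ord M).
  - exact: (leq_card_mul_imset (solves_inj_AB_AC solP)).
  - exact: (leq_card_mul_imset (solves_inj_AB_BC solP)).
  - exact: (leq_card_mul_imset (solves_inj_AC_BC solP)).
split.
- case=> TAB [TAC [TBC [P [solP [<- [<- <-]]]]]].
  pose f := corestrict (s_AB P); pose g := corestrict (s_AC P).
  have fooling x y z : f x = f y -> g x = g z -> s_BC P y = s_BC P z ->
      x = y /\ y = z.
    by move=> /(congr1 val) efxy /(congr1 val) egxz; exact: solves_fooling.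
  exists (range_of (s_AB P)), (range_of (s_AC P)), TBC, (fooling_edges f g),
    (fooling_colour f g (s_BC P) (Ordinal hM)).
  rewrite !card_range_of (card_fooling_edges fooling) card_ord.
  rewrite (fooling_colour_imset fooling).
  split=> //; split=> //; split=> //; split.
    by apply: fooling_edges_no_isolated; exact: corestrict_surj.
  by split=> //; exact: fooling_colour_distance2.
- case=> U [V [C [E [W [<- [<- [<- [isoE [colW <-]]]]]]]]].
  exists U, V, C, (graph_protocol E W); split; first exact: graph_protocol_solves.
  rewrite /range_size !imset_enum_val no_isolated_imset_fst // no_isolated_imset_snd //.
  by rewrite !cardsT.
Qed.
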